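(* Let $N_A,N_B\ge1$ be integers, $\overline{\gamma}_B>0$, $\sigma\in(0,1)$ and $R_b\ge0$. Define $p_{suc}(\mu)=1-\operatorname{P}\!\left(N_B,\mu/\overline{\gamma}_B\right)^{N_A}$ and $\alpha=\Gamma(N_B+1)^{1/N_B}$. If $p_{suc}(2^{R_b}-1)\ge\sigma$, then $$R_b\le\log_2\!\left(1+\overline{\gamma}_B\,\alpha\,\log\!\left(\left(1-(1-\sigma)^{\frac{1}{N_A N_B}}\right)^{-1}\right)\right),$$ where $\log$ is the natural logarithm.
   Context: $\operatorname{P}(s,z)=\gamma(s,z)/\Gamma(s)$ denotes the regularized lower incomplete gamma function, $\gamma(s,z)=\int_0^z t^{s-1}e^{-t}\,dt$. $p_{suc}(\mu)$ is the probability that the post-selection, post-combining SNR of the legitimate link exceeds $\mu$, for transmit antenna selection over $N_A$ antennas and maximal ratio combining over $N_B$ antennas in Rayleigh fading with average per-branch SNR $\overline{\gamma}_B$. *)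

From Stdlib Require Import Reals Lra Arith Factorial.
Open Scope R_scope.

Definition lig_integrand (n : nat) (t : R) : R := t ^ (n - 1) * exp (- t).

Lemma lig_integrand_cont (n : nat) : continuity (lig_integrand n).
Proof.
  unfold lig_integrand. apply continuity_mult.
  - apply derivable_continuous, derivable_pow.
  - apply (continuity_comp (fun t => - t) exp).
    + apply continuity_opp, derivable_continuous, derivable_id.
    + apply derivable_continuous, derivable_exp.
Qed.

Lemma lig_integrable (n : nat) (z : R) :
  Riemann_integrable (lig_integrand n) 0 z.
Proof.
  destruct (Rle_dec 0 z) as [H|H].
  - apply continuity_implies_RiemannInt; [exact H|].
    intros x _; apply lig_integrand_cont.
  - apply RiemannInt_P1, continuity_implies_RiemannInt; [lra|].
    intros x _; apply lig_integrand_cont.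
Qed.

Definition lower_inc_gamma (n : nat) (z : R) : R := RiemannInt (lig_integrable n z).

Definition Gamma_nat (n : nat) : R := INR (Factorial.fact (n - 1)).

Definition reg_lower_gamma (n : nat) (z : R) : R := lower_inc_gamma n z / Gamma_nat n.

(* success probability: TAS over NA antennas, MRC over NB antennas, Rayleigh *)
Definition p_suc (NA NB : nat) (gB mu : R) : R := 1 - (reg_lower_gamma NB (mu / gB)) ^ NA.

Definition alpha (NB : nat) : R := Rpower (Gamma_nat (NB + 1)) (/ INR NB).

Definition log2 (x : R) : R := ln x / ln 2.

(** Write [N = k + 1] and [s = (N!)^(-1/N)].  The whole argument is Alzer's
    lower bound [P(N, x) >= (1 - exp (- s x))^N] for the regularized incomplete
    gamma function.  With [b = (1 - s)/k] (any [b] in [[0, s]] when [k = 0],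
    where [s = 1]) the derivative of the gap [P(N, t) - (1 - exp (- s t))^N]
    has the sign of [A t - B t], where [A t = t exp (- b t)] and
    [B t = (1 - exp (- s t))/s]; the derivative of [A - B] in turn has the sign
    of [1 - b t - exp (- (s - b) t)], a concave function vanishing at [0].
    Each of these functions starts at [0] and, once negative on [[0, +oo)],
    stays nonpositive; so the gap, which tends to [0] at infinity, can never
    become negative.  The proposition then follows by inverting the bound
    [P(N_B, x)^N_A <= 1 - sigma]. *)

From Stdlib Require Import Reals Lra Lia Factorial Classical.
From Coquelicot Require Import Coquelicot.
Open Scope R_scope.

Lemma exp_le_exp x y : x <= y -> exp x <= exp y.
Proof. intros [H|H]; [left; apply exp_increasing; exact H | subst; lra]. Qed.

Lemma exp_pow n y : exp y ^ n = exp (INR n * y).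
Proof.
  induction n as [|n IH].
  - simpl. rewrite Rmult_0_l, exp_0. reflexivity.
  - rewrite S_INR. simpl pow. rewrite IH, <- exp_plus. f_equal. ring.
Qed.

Lemma one_sub_exp_opp_bounds x : 0 <= x -> 0 <= 1 - exp (- x) <= 1.
Proof.
  intros Hx. pose proof (exp_pos (- x)).
  assert (exp (- x) <= exp 0) by (apply exp_le_exp; lra).
  rewrite exp_0 in *. lra.
Qed.

Lemma fact_le_pow n : INR (fact n) <= INR n ^ n.
Proof.
  induction n as [|n IH]; [simpl; lra|].
  rewrite fact_simpl, mult_INR. change (INR (S n) ^ S n) with (INR (S n) * INR (S n) ^ n).
  apply Rmult_le_compat_l; [apply pos_INR|].
  apply Rle_trans with (INR n ^ n); [exact IH|].
  apply pow_incr. split; [apply pos_INR | rewrite S_INR; lra].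
Qed.

(** * Closed form of the regularized incomplete gamma function *)

Fixpoint exp_taylor (n : nat) (x : R) : R :=
  match n with O => 0 | S k => exp_taylor k x + x ^ k / INR (fact k) end.

Lemma is_derive_exp_taylor n x : is_derive (exp_taylor (S n)) x (exp_taylor n x).
Proof.
  induction n as [|n IH].
  - apply (is_derive_ext (fun t => 0 + t ^ 0 / INR (fact 0))); [reflexivity|].
    auto_derive; [simpl; lra | simpl; ring].
  - apply (is_derive_plus _ (fun t => t ^ S n / INR (fact (S n)))); [exact IH|].
    pose proof (INR_fact_lt_0 n). pose proof (pos_INR n).
    auto_derive; [exact I|].
    change (match n with 0%nat => 1 | S _ => INR n + 1 end) with (INR (S n)).
    rewrite plus_INR, mult_INR, S_INR. field. nra.
Qed.

Lemma exp_taylor_0 n : exp_taylor (S n) 0 = 1.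
Proof.
  induction n as [|n IH]; [simpl; field|].
  change (exp_taylor (S (S n)) 0) with (exp_taylor (S n) 0 + 0 ^ S n / INR (fact (S n))).
  rewrite IH, pow_i by lia.
  unfold Rdiv. ring.
Qed.

Lemma reg_lower_gamma_closed_form N x : (1 <= N)%nat ->
  reg_lower_gamma N x = 1 - exp (- x) * exp_taylor N x.
Proof.
  intros HN. destruct N as [|n]; [lia|].
  unfold reg_lower_gamma, lower_inc_gamma, Gamma_nat.
  rewrite <- RInt_Reals. replace (S n - 1)%nat with n by lia.
  pose proof (INR_fact_lt_0 n).
  set (G t := - INR (fact n) * (exp (- t) * exp_taylor (S n) t)).
  assert (HG : is_RInt (lig_integrand (S n)) 0 x (minus (G x) (G 0))).
  { apply (@is_RInt_derive R_CompleteNormedModule G).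
    - intros t _.
      replace (lig_integrand (S n) t) with
        (- INR (fact n) * ((-1 * exp (- t)) * exp_taylor (S n) t
                           + exp (- t) * exp_taylor n t)).
      2:{ unfold lig_integrand. replace (S n - 1)%nat with n by lia.
          simpl exp_taylor. field. lra. }
      apply (is_derive_scal (fun t => exp (- t) * exp_taylor (S n) t)).
      apply (Derive.is_derive_mult (fun t => exp (- t))); [|apply is_derive_exp_taylor].
      auto_derive; [exact I | ring].
    - intros t _. apply continuity_pt_filterlim, lig_integrand_cont. }
  rewrite (is_RInt_unique _ _ _ _ HG). change (minus (G x) (G 0)) with (G x - G 0).
  unfold G. rewrite exp_taylor_0, Ropp_0, exp_0. field. lra.
Qed.

Lemma exp_taylor_bounds n y : 0 <= y -> 0 <= exp_taylor n y <= INR n * (1 + y) ^ n.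
Proof.
  intro Hy. induction n as [|n IH]; [simpl; lra|].
  simpl exp_taylor. rewrite S_INR.
  assert (H1 : 1 <= INR (fact n)) by (apply (le_INR 1), lt_O_fact).
  assert (0 <= y ^ n) by (apply pow_le; lra).
  assert (y ^ n <= (1 + y) ^ n) by (apply pow_incr; lra).
  assert ((1 + y) ^ n <= (1 + y) ^ S n) by (apply Rle_pow; [lra|lia]).
  assert (0 <= y ^ n / INR (fact n) <= y ^ n).
  { split; [apply Rdiv_le_0_compat; lra|].
    apply Rmult_le_reg_r with (INR (fact n)); [lra|].
    unfold Rdiv. rewrite Rmult_assoc, Rinv_l by lra. nra. }
  pose proof (pos_INR n). nra.
Qed.

Lemma pow_div_le_exp M y : (1 <= M)%nat -> 0 <= y -> ((1 + y) / INR M) ^ M <= exp y.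
Proof.
  intros HM Hy. assert (1 <= INR M) by (apply (le_INR 1); lia).
  replace (exp y) with (exp (y / INR M) ^ M) by (rewrite exp_pow; f_equal; field; lra).
  apply pow_incr. split; [apply Rdiv_le_0_compat; lra|].
  apply Rle_trans with (1 + y / INR M); [|apply exp_ineq1_le].
  assert (/ INR M <= 1) by (rewrite <- Rinv_1; apply Rinv_le_contravar; lra).
  unfold Rdiv. rewrite Rmult_plus_distr_r. lra.
Qed.

Lemma exp_taylor_tail_bound n y : 0 <= y ->
  exp (- y) * exp_taylor n y <= INR n * INR (S n) ^ S n / (1 + y).
Proof.
  intro Hy. destruct (exp_taylor_bounds n y Hy) as [T0 T1].
  assert (1 <= INR (S n)) by (apply (le_INR 1); lia).
  set (M := INR (S n)) in *. set (Q := 1 + y).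
  assert (0 < Q) by (unfold Q; lra).
  assert (0 < Q ^ S n) by (apply pow_lt; lra).
  assert (HE : exp (- y) <= M ^ S n / Q ^ S n).
  { pose proof (pow_div_le_exp (S n) y ltac:(lia) Hy) as E.
    unfold Rdiv in E. rewrite Rpow_mult_distr, pow_inv in E.
    rewrite exp_Ropp.
    replace (M ^ S n / Q ^ S n) with (/ (Q ^ S n * / M ^ S n))
      by (field; split; apply pow_nonzero; lra).
    apply Rinv_le_contravar; [|exact E].
    apply Rmult_lt_0_compat; [lra | apply Rinv_0_lt_compat, pow_lt; lra]. }
  apply Rle_trans with (M ^ S n / Q ^ S n * (INR n * Q ^ n)).
  - apply Rmult_le_compat; [left; apply exp_pos | lra | exact HE | exact T1].
  - right. simpl pow. field. split; [|apply pow_nonzero]; lra.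
Qed.

Lemma exp_taylor_tail_small n e : 0 < e ->
  exists y0, forall y, y0 <= y -> exp (- y) * exp_taylor n y < e.
Proof.
  intros He. set (K := INR n * INR (S n) ^ S n).
  assert (0 <= K) by (apply Rmult_le_pos; [apply pos_INR | apply pow_le, pos_INR]).
  exists (Rmax 0 (K / e)). intros y Hy.
  pose proof (Rmax_l 0 (K / e)). pose proof (Rmax_r 0 (K / e)).
  apply Rle_lt_trans with (K / (1 + y)); [apply exp_taylor_tail_bound; lra|].
  apply Rmult_lt_reg_r with (1 + y); [lra|].
  unfold Rdiv. rewrite Rmult_assoc, Rinv_l, Rmult_1_r by lra.
  assert (K <= e * y).
  { apply Rmult_le_reg_r with (/ e); [apply Rinv_0_lt_compat; lra|].
    rewrite (Rmult_comm e), Rmult_assoc, Rinv_r, Rmult_1_r by lra. lra. }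
  lra.
Qed.

Definition nonpos_after_neg (g : R -> R) : Prop :=
  forall t u, 0 <= t <= u -> g t < 0 -> g u <= 0.

Lemma is_derive_nonneg_le (g dg : R -> R) x y : x <= y ->
  (forall t, x <= t <= y -> is_derive g t (dg t)) ->
  (forall t, x <= t <= y -> 0 <= dg t) -> g x <= g y.
Proof.
  intros Hxy Hd Hpos.
  destruct (MVT_gen g x y dg) as [c [Hc Heq]];
    rewrite ?Rmin_left, ?Rmax_right in * by lra.
  - intros t Ht. apply Hd. lra.
  - intros t Ht. apply continuity_pt_filterlim, (ex_derive_continuous g).
    exists (dg t). apply Hd. lra.
  - assert (0 <= dg c * (y - x)) by (apply Rmult_le_pos; [apply Hpos|]; lra). lra.
Qed.

(** Either [dg] is negative somewhere on [[0, x]], and [g] is nonincreasing from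
    there on, or [dg >= 0] on [[0, x]], which contradicts [g x < 0 = g 0]. *)
Lemma le_after_neg_of_derive (g dg : R -> R) :
  (forall t, is_derive g t (dg t)) -> g 0 = 0 -> nonpos_after_neg dg ->
  forall x y, 0 <= x <= y -> g x < 0 -> g y <= g x.
Proof.
  intros Hd H0 Hdg x y Hxy Hgx.
  destruct (classic (exists t, 0 <= t <= x /\ dg t < 0)) as [[t [Ht Hdt]]|Hn].
  - assert (- g x <= - g y); [|lra].
    apply (is_derive_nonneg_le (fun z => - g z) (fun z => - dg z)); [lra| |].
    + intros z _. apply (is_derive_opp g), Hd.
    + intros z Hz. assert (dg z <= 0) by (apply (Hdg t z); [lra|exact Hdt]). lra.
  - assert (g 0 <= g x); [|lra].
    apply (is_derive_nonneg_le g dg); [lra | intros; apply Hd |].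
    intros z Hz. apply Rnot_lt_le. intro Hz'. apply Hn. exists z. split; [lra|exact Hz'].
Qed.

Lemma nonpos_after_neg_of_derive (g dg : R -> R) :
  (forall t, is_derive g t (dg t)) -> g 0 = 0 -> nonpos_after_neg dg ->
  nonpos_after_neg g.
Proof.
  intros Hd H0 Hdg t u Htu Hgt.
  pose proof (le_after_neg_of_derive g dg Hd H0 Hdg t u Htu Hgt). lra.
Qed.

Lemma nonpos_after_neg_of_nonincreasing (g : R -> R) :
  (forall t u, 0 <= t <= u -> g u <= g t) -> nonpos_after_neg g.
Proof. intros Hg t u Htu Ht. pose proof (Hg t u Htu). lra. Qed.

Lemma nonpos_after_neg_mul_pos (c g : R -> R) :
  (forall t, 0 <= t -> 0 < c t) -> nonpos_after_neg g ->
  nonpos_after_neg (fun t => c t * g t).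
Proof.
  intros Hc Hg t u Htu Ht.
  pose proof (Hc t ltac:(lra)). pose proof (Hc u ltac:(lra)).
  assert (g t < 0) by (apply Rnot_le_lt; intro; nra).
  pose proof (Hg t u Htu ltac:(assumption)). nra.
Qed.

Lemma nonpos_after_neg_pow_sub (A B : R -> R) n :
  (forall t, 0 <= t -> 0 <= A t) -> (forall t, 0 <= t -> 0 <= B t) ->
  nonpos_after_neg (fun t => A t - B t) ->
  nonpos_after_neg (fun t => A t ^ n - B t ^ n).
Proof.
  intros HA HB Hg t u Htu Ht.
  assert (A t < B t).
  { apply Rnot_le_lt. intro HBA.
    assert (B t ^ n <= A t ^ n) by (apply pow_incr; split; [apply HB; lra | exact HBA]).
    lra. }
  assert (A u <= B u) by (pose proof (Hg t u Htu ltac:(lra)); lra).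
  assert (A u ^ n <= B u ^ n) by (apply pow_incr; split; [apply HA; lra | assumption]).
  lra.
Qed.

(** * Alzer's lower bound *)

Section Alzer.

Variables (k : nat) (s b : R).
Hypothesis s_pos : 0 < s.
Hypothesis b_range : 0 <= b <= s.
Hypothesis kb_eq : INR k * b = 1 - s.
Hypothesis s_pow_fact : s ^ S k * INR (fact (S k)) = 1.

Let A (t : R) : R := t * exp (- (b * t)).
Let B (t : R) : R := (1 - exp (- (s * t))) / s.

Let alzer_gap (t : R) : R :=
  1 - exp (- t) * exp_taylor (S k) t - (1 - exp (- (s * t))) ^ S k.

Lemma exp_opp_s_split t : exp (- (s * t)) = exp (- (b * t)) * exp (- ((s - b) * t)).
Proof. rewrite <- exp_plus. f_equal. ring. Qed.

Lemma alzer_kernel_nonpos_after_neg :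
  nonpos_after_neg (fun t => 1 - b * t - exp (- ((s - b) * t))).
Proof.
  apply (nonpos_after_neg_of_derive _ (fun t => - b + (s - b) * exp (- ((s - b) * t)))).
  - intro t. auto_derive; [exact I | ring].
  - cbv beta. rewrite !Rmult_0_r, Ropp_0, exp_0. ring.
  - apply nonpos_after_neg_of_nonincreasing. intros t u Htu.
    assert (exp (- ((s - b) * u)) <= exp (- ((s - b) * t))) by (apply exp_le_exp; nra).
    nra.
Qed.

Lemma AB_nonpos_after_neg : nonpos_after_neg (fun t => A t - B t).
Proof.
  apply (nonpos_after_neg_of_derive _
           (fun t => exp (- (b * t)) * (1 - b * t - exp (- ((s - b) * t))))).
  - intro t. unfold A, B.
    apply (is_derive_ext (fun t => t * exp (- (b * t))
                                   - (1 - exp (- (b * t)) * exp (- ((s - b) * t))) / s)).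
    { intro z. rewrite exp_opp_s_split. reflexivity. }
    auto_derive; [exact I|]. field. lra.
  - unfold A, B. rewrite !Rmult_0_r, Ropp_0, exp_0. field. lra.
  - apply nonpos_after_neg_mul_pos; [intros; apply exp_pos|].
    exact alzer_kernel_nonpos_after_neg.
Qed.

(** [s^k k! (k+1) s = 1] and [exp (- s t) exp (- k b t) = exp (- t)] make the two
    terms of the derivative share the factor [exp (- s t) / k!]. *)
Lemma is_derive_alzer_gap t :
  is_derive alzer_gap t (exp (- (s * t)) / INR (fact k) * (A t ^ k - B t ^ k)).
Proof.
  assert (Hd : is_derive alzer_gap t
     (0 - (-1 * exp (- t) * exp_taylor (S k) t + exp (- t) * exp_taylor k t)
      - INR (S k) * (s * exp (- (s * t))) * (1 - exp (- (s * t))) ^ k)).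
  { apply (is_derive_minus (fun t => 1 - exp (- t) * exp_taylor (S k) t)).
    - apply (is_derive_minus (fun _ => 1)); [exact (is_derive_const 1 t)|].
      apply (Derive.is_derive_mult (fun t => exp (- t))); [|apply is_derive_exp_taylor].
      auto_derive; [exact I | ring].
    - auto_derive; [exact I|].
      change (match k with 0%nat => 1 | S _ => INR k + 1 end) with (INR (S k)).
      replace (1 + - exp (- (s * t))) with (1 - exp (- (s * t))) by ring. ring. }
  replace (exp (- (s * t)) / INR (fact k) * (A t ^ k - B t ^ k)) with
     (0 - (-1 * exp (- t) * exp_taylor (S k) t + exp (- t) * exp_taylor k t)
      - INR (S k) * (s * exp (- (s * t))) * (1 - exp (- (s * t))) ^ k); [exact Hd|].
  unfold A, B. simpl exp_taylor.
  rewrite Rpow_mult_distr, exp_pow.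
  replace (INR k * - (b * t)) with (- t + s * t)
    by (replace (INR k * - (b * t)) with (- (INR k * b) * t) by ring; rewrite kb_eq; ring).
  unfold Rdiv at 3. rewrite Rpow_mult_distr, pow_inv, exp_plus.
  replace (exp (s * t)) with (/ exp (- (s * t))) by (rewrite exp_Ropp, Rinv_inv; reflexivity).
  pose proof (INR_fact_lt_0 k). pose proof (exp_pos (- (s * t))).
  assert (0 < s ^ k) by (apply pow_lt; lra).
  replace (/ s ^ k) with (s * INR (S k) * INR (fact k)).
  2:{ rewrite fact_simpl, mult_INR in s_pow_fact. simpl pow in s_pow_fact.
      apply Rmult_eq_reg_l with (s ^ k); [rewrite Rinv_r; lra | lra]. }
  field. lra.
Qed.

Lemma alzer_gap_nonneg x : 0 <= x -> 0 <= alzer_gap x.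
Proof.
  intros Hx. apply Rnot_lt_le. intro Hneg.
  assert (Hdec : forall y, x <= y -> alzer_gap y <= alzer_gap x).
  { intros y Hy. apply (le_after_neg_of_derive _ _ is_derive_alzer_gap); [| |lra|exact Hneg].
    - unfold alzer_gap. rewrite exp_taylor_0, Rmult_0_r, Ropp_0, exp_0, Rminus_diag, pow_i by lia.
      ring.
    - apply nonpos_after_neg_mul_pos.
      + intros. apply Rdiv_lt_0_compat; [apply exp_pos | apply INR_fact_lt_0].
      + apply nonpos_after_neg_pow_sub; [| |exact AB_nonpos_after_neg]; intros z Hz.
        * unfold A. apply Rmult_le_pos; [lra | left; apply exp_pos].
        * unfold B. apply Rdiv_le_0_compat; [|lra].
          apply one_sub_exp_opp_bounds, Rmult_le_pos; lra. }
  destruct (exp_taylor_tail_small (S k) (- alzer_gap x) ltac:(lra)) as [y0 Hy0].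
  set (y := Rmax x y0).
  assert (Hxy : x <= y) by apply Rmax_l.
  assert (Hy0y : y0 <= y) by apply Rmax_r.
  pose proof (Hdec y Hxy). pose proof (Hy0 y Hy0y).
  assert (0 <= (1 - exp (- (s * y))) ^ S k <= 1).
  { assert (0 <= s * y) by (apply Rmult_le_pos; lra).
    pose proof (one_sub_exp_opp_bounds (s * y) ltac:(assumption)).
    split; [apply pow_le; lra|].
    apply Rle_trans with (1 ^ S k); [apply pow_incr; lra | rewrite pow1; lra]. }
  unfold alzer_gap in *. lra.
Qed.

End Alzer.

Lemma alzer_slope_exists N s : (1 <= N)%nat -> 0 < s -> s ^ N * INR (fact N) = 1 ->
  exists b, 0 <= b <= s /\ (INR N - 1) * b = 1 - s.
Proof.
  intros HN Hs Heq.
  assert (Hs1 : s <= 1).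
  { apply Rnot_lt_le. intro Hc.
    assert (1 < s ^ N) by (apply Rlt_pow_R1; [lra|lia]).
    assert (1 <= INR (fact N)) by (apply (le_INR 1), lt_O_fact). nra. }
  assert (HsN : 1 <= s * INR N).
  { apply Rnot_lt_le. intro Hc.
    assert (Hpow : 0 <= (s * INR N) ^ N < 1).
    { apply pow_lt_1_compat; [|lia]. split; [|lra].
      apply Rmult_le_pos; [lra | apply pos_INR]. }
    rewrite Rpow_mult_distr in Hpow.
    pose proof (fact_le_pow N). assert (0 <= s ^ N) by (apply pow_le; lra). nra. }
  destruct (Nat.eq_dec N 1) as [->|HN1].
  - exists 0. simpl in Heq. lra.
  - assert (2 <= INR N) by (apply (le_INR 2); lia).
    exists ((1 - s) / (INR N - 1)). split; [split|].
    + apply Rdiv_le_0_compat; lra.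
    + apply Rmult_le_reg_r with (INR N - 1); [lra|].
      unfold Rdiv. rewrite Rmult_assoc, Rinv_l by lra. nra.
    + field. lra.
Qed.

Lemma alzer_lower_bound N s x : (1 <= N)%nat -> 0 < s -> s ^ N * INR (fact N) = 1 ->
  0 <= x -> (1 - exp (- (s * x))) ^ N <= 1 - exp (- x) * exp_taylor N x.
Proof.
  intros HN Hs Heq Hx.
  destruct (alzer_slope_exists N s HN Hs Heq) as [b [Hb Hkb]].
  destruct N as [|k]; [lia|].
  rewrite S_INR in Hkb. replace (INR k + 1 - 1) with (INR k) in Hkb by ring.
  pose proof (alzer_gap_nonneg k s b Hs Hb Hkb Heq x Hx). lra.
Qed.

(** * The outage bound *)

Lemma alpha_pos N : 0 < alpha N.
Proof. apply exp_pos. Qed.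

Lemma alpha_pow N : (1 <= N)%nat -> alpha N ^ N = INR (fact N).
Proof.
  intros HN. pose proof (INR_fact_lt_0 N).
  assert (0 < INR N) by (apply lt_0_INR; lia).
  rewrite <- Rpower_pow by apply alpha_pos.
  unfold alpha, Gamma_nat. replace (N + 1 - 1)%nat with N by lia.
  rewrite Rpower_mult, Rinv_l by lra. apply Rpower_1. lra.
Qed.

Lemma reg_lower_gamma_ge N x : (1 <= N)%nat -> 0 <= x ->
  (1 - exp (- (x / alpha N))) ^ N <= reg_lower_gamma N x.
Proof.
  intros HN Hx. pose proof (alpha_pos N).
  rewrite reg_lower_gamma_closed_form by exact HN.
  replace (x / alpha N) with (/ alpha N * x) by (unfold Rdiv; ring).
  apply alzer_lower_bound; [exact HN | apply Rinv_0_lt_compat; lra | | exact Hx].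
  rewrite pow_inv, alpha_pow by exact HN. field. apply INR_fact_neq_0.
Qed.

Lemma le_Rpower_inv_of_pow_le n w a : (0 < n)%nat -> 0 <= w -> 0 < a ->
  w ^ n <= a -> w <= Rpower a (/ INR n).
Proof.
  intros Hn [Hw|<-] Ha Hwa; [|left; apply exp_pos].
  assert (0 < INR n) by (apply lt_0_INR; lia).
  replace w with (Rpower (w ^ n) (/ INR n)).
  2:{ rewrite <- Rpower_pow, Rpower_mult, Rinv_r by lra. apply Rpower_1. lra. }
  apply Rle_Rpower_l; [left; apply Rinv_0_lt_compat; lra|].
  split; [apply pow_lt|]; assumption.
Qed.

Lemma Rpower_inv_lt_1 n a : (0 < n)%nat -> 0 < a < 1 -> Rpower a (/ INR n) < 1.
Proof.
  intros Hn Ha. unfold Rpower. rewrite <- exp_0. apply exp_increasing.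
  assert (ln a < 0) by (rewrite <- ln_1; apply ln_increasing; lra).
  assert (0 < / INR n) by (apply Rinv_0_lt_compat, lt_0_INR; lia). nra.
Qed.

Lemma le_mul_ln_inv_of_one_sub_exp_le a c x : 0 < a -> c < 1 ->
  1 - exp (- (x / a)) <= c -> x <= a * ln (/ (1 - c)).
Proof.
  intros Ha Hc Hxc. rewrite ln_Rinv by lra.
  assert (ln (1 - c) <= - (x / a)).
  { rewrite <- (ln_exp (- (x / a))). apply ln_le; lra. }
  apply Rmult_le_reg_l with (/ a); [apply Rinv_0_lt_compat; lra|].
  rewrite <- Rmult_assoc, Rinv_l, Rmult_1_l by lra. rewrite Rmult_comm. unfold Rdiv in *. lra.
Qed.

Lemma le_log2_of_Rpower_le r y : Rpower 2 r <= y -> r <= log2 y.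
Proof.
  intros H. assert (Hln2 : 0 < ln 2) by (rewrite <- ln_1; apply ln_increasing; lra).
  unfold log2. apply Rmult_le_reg_r with (ln 2); [exact Hln2|].
  unfold Rdiv. rewrite Rmult_assoc, Rinv_l, Rmult_1_r by lra.
  replace (r * ln 2) with (ln (Rpower 2 r)) by (unfold Rpower; rewrite ln_exp; reflexivity).
  apply ln_le; [apply exp_pos | exact H].
Qed.

Theorem proposition1 (NA NB : nat) (gB sigma Rb : R) :
  (1 <= NA)%nat -> (1 <= NB)%nat -> 0 < gB -> 0 < sigma < 1 -> 0 <= Rb ->
  p_suc NA NB gB (Rpower 2 Rb - 1) >= sigma ->
  Rb <= log2 (1 + gB * alpha NB *
          ln (/ (1 - Rpower (1 - sigma) (/ INR (NA * NB))))).
Proof.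
  intros HNA HNB HgB Hsig HRb Hp. unfold p_suc in Hp.
  assert (H2R : 1 <= Rpower 2 Rb) by (rewrite <- (Rpower_O 2) by lra; apply Rle_Rpower; lra).
  set (x := (Rpower 2 Rb - 1) / gB) in Hp.
  assert (Hx : 0 <= x) by (apply Rdiv_le_0_compat; lra).
  set (w := 1 - exp (- (x / alpha NB))).
  assert (Hw : 0 <= w).
  { apply one_sub_exp_opp_bounds, Rdiv_le_0_compat; [exact Hx | apply alpha_pos]. }
  assert (HwP : w ^ (NA * NB) <= 1 - sigma).
  { rewrite Nat.mul_comm, pow_mult.
    apply Rle_trans with (reg_lower_gamma NB x ^ NA); [|lra].
    apply pow_incr. split; [apply pow_le, Hw | apply reg_lower_gamma_ge; assumption]. }
  set (c := Rpower (1 - sigma) (/ INR (NA * NB))).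
  assert (Hwc : w <= c) by (apply le_Rpower_inv_of_pow_le; [lia | exact Hw | lra | exact HwP]).
  assert (Hc : c < 1) by (apply Rpower_inv_lt_1; [lia | lra]).
  assert (Hxc : x <= alpha NB * ln (/ (1 - c))).
  { apply le_mul_ln_inv_of_one_sub_exp_le; [apply alpha_pos | exact Hc | exact Hwc]. }
  apply le_log2_of_Rpower_le.
  replace (Rpower 2 Rb) with (1 + gB * x) by (unfold x; field; lra).
  rewrite Rmult_assoc. apply Rplus_le_compat_l, Rmult_le_compat_l; lra.
Qed.
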